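(* Let $\Gamma$ be an $(l,2)$-hyperflower on $N$ vertices, with eigenvalues $\lambda_1\le\cdots\le\lambda_N$ of its (signless) normalized Laplacian. Then the spectrum of $\Gamma$ is given by: $0$, with multiplicity $N-l-1$; $1$, with multiplicity at least $l-1$; $\lambda_N>1$; and $\lambda_{N-1}=N-\lambda_N-l+1\geq 1$. In the particular case in which $\#h$ is the same for all $h\in\mathcal{H}$, $\lambda_N=\frac{N-l}{2}+1$ and $\lambda_{N-1}=\frac{N-l}{2}$.
   Context: A hypergraph $\Gamma=(\mathcal{V},\mathcal{H})$ has a finite vertex set $\mathcal{V}=\{v_1,\ldots,v_N\}$ and a set $\mathcal{H}$ of nonempty subsets of $\mathcal{V}$ (hyperedges); standing assumption: no isolated vertices. $\deg(v)$ is the number of hyperedges containing $v$, $D$ the diagonal degree matrix, $A$ the matrix with $A_{ii}=0$ and $A_{ij}=-\#\{h\in\mathcal{H}: v_i,v_j\in h\}$ for $i\ne j$, and the (signless) normalized Laplacian is $L=\mathrm{Id}-D^{-1}A$, whose eigenvalues are real and denoted $\lambda_1\le\cdots\le\lambda_N$; $\#h$ is the cardinality of $h$. An $(l,r)$-hyperflower is a hypergraph whose vertex set is $\mathcal{V}=U\sqcup\mathcal{W}$ with $U=\{v_1,\ldots,v_l\}$ (peripheral vertices) and such that there are $r$ pairwise disjoint nonempty sets $h_1,\ldots,h_r\subseteq\mathcal{W}$ with $\mathcal{H}=\{h_i\cup\{v_j\}: i=1,\ldots,r,\ j=1,\ldots,l\}$ (by the no-isolated-vertex assumption, $\mathcal{W}=h_1\cup\cdots\cup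 h_r$). *)

From HB Require Import structures.
From mathcomp Require Import all_boot all_order all_algebra.
From mathcomp Require Import reals.
Set Implicit Arguments. Unset Strict Implicit. Unset Printing Implicit Defensive.
Import Order.TTheory GRing.Theory Num.Theory.
Local Open Scope ring_scope.

Definition hyperedges_nonempty (N : nat) (H : {set {set 'I_N}}) : Prop :=
  forall h, h \in H -> h != set0.

Definition no_isolated (N : nat) (H : {set {set 'I_N}}) : Prop :=
  forall v : 'I_N, exists2 h, h \in H & v \in h.

Definition hdeg (N : nat) (H : {set {set 'I_N}}) (v : 'I_N) : nat :=
  #|[set h in H | v \in h]|.

Definition hD (R : realType) (N : nat) (H : {set {set 'I_N}}) : 'M[R]_N :=
  \matrix_(i, j) (if i == j then (hdeg H i)%:R else 0).

Definition hA (R : realType) (N : nat) (H : {set {set 'I_N}}) : 'M[R]_N :=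
  \matrix_(i, j) (if i == j then 0
                  else - (#|[set h in H | (i \in h) && (j \in h)]|)%:R).

Definition hLap (R : realType) (N : nat) (H : {set {set 'I_N}}) : 'M[R]_N :=
  1%:M - invmx (hD R H) *m hA R H.

(* (l,r)-hyperflower with r = 2: U = {v_1,..,v_l}, h1 h2 disjoint nonempty
   subsets of W = V \ U, H = {h_i ∪ {v_j}}. *)
Definition is_hyperflower2 (N l : nat) (H : {set {set 'I_N}}) : Prop :=
  let U := [set i : 'I_N | (i < l)%N] in
  (l <= N)%N /\
  exists h1 h2 : {set 'I_N},
    [/\ H = [set h1 :|: [set u] | u in U] :|: [set h2 :|: [set u] | u in U],
        h1 != set0, h2 != set0,
        [disjoint h1 & h2] &
        [disjoint h1 :|: h2 & U]].

From HB Require Import structures.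
From mathcomp Require Import all_boot all_order all_algebra.
From mathcomp Require Import reals.
From mathcomp Require Import ring lra zify.
Set Implicit Arguments. Unset Strict Implicit. Unset Printing Implicit Defensive.
Import Order.TTheory GRing.Theory Num.Theory.
Local Open Scope ring_scope.

(* The Laplacian only sees the partition of the vertices into the centre U
   (degree 2) and the petals h1, h2 (degree l, sizes n1, n2): the row of a
   centre vertex i is e_i + 1/2 on h1 :|: h2, the row of a petal vertex is 1/l
   on U plus 1 on its own petal.  Hence e_k - e_r is an eigenvector for 1 when
   k, r lie in U, and for 0 when they lie in the same petal.  On vectors that
   are constant on U, h1, h2 the Laplacian acts by the quotient matrix
   [[1, n1/2, n2/2]; [1, n1, 0]; [1, 0, n2]], whose characteristic polynomial
   is m (m^2 - (n1 + n2 + 1) m + (n1 + n2)/2 + n1 n2).  Together these vectors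
   form an eigenbasis, so the spectrum is 0 (n1 + n2 - 1 times), 1 (l - 1
   times) and the roots (n1 + n2 + 1 -/+ sqrt (1 + (n1 - n2)^2)) / 2, whose
   sum is N - l + 1 and the smaller of which is at least 1. *)

Lemma char_poly_similar (F : fieldType) n (A B P : 'M[F]_n) :
  P \in unitmx -> A *m P = P *m B -> char_poly A = char_poly B.
Proof.
move=> P_unit AP_PB; set Px := map_mx polyC P.
have charAP : char_poly_mx A *m Px = Px *m char_poly_mx B.
  by rewrite mulmxBl mulmxBr scalar_mxC -!map_mxM AP_PB.
have detPx_neq0 : \det Px != 0.
  by rewrite det_map_mx polyC_eq0 -unitfE -unitmxE.
by apply: (mulIf detPx_neq0); rewrite -!det_mulmx charAP !det_mulmx mulrC.
Qed.

Lemma invmx_diag (F : fieldType) n (d : 'rV[F]_n) :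
  (forall i, d 0 i != 0) -> invmx (diag_mx d) = diag_mx (\row_i (d 0 i)^-1).
Proof.
move=> d_neq0; have dV : diag_mx d *m diag_mx (\row_i (d 0 i)^-1) = 1%:M.
  apply/matrixP => i j; rewrite mul_mx_diag !mxE.
  by case: eqP => [<-|_]; rewrite ?mulr1n ?mulfV ?mulr0n ?mul0r.
have [d_unit _] := mulmx1_unit dV.
by rewrite -[RHS](mulKmx d_unit) dV mulmx1.
Qed.

Lemma sum_mul_deltaB (R : pzRingType) (I : finType) (F : I -> R) k r :
  \sum_j F j * ((j == k)%:R - (j == r)%:R) = F k - F r.
Proof.
have delta s : \sum_j F j * (j == s)%:R = F s.
  rewrite (bigD1 s) //= eqxx mulr1 big1 ?addr0 // => j /negbTE ->.
  by rewrite mulr0.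
by under eq_bigr do rewrite mulrBr; rewrite sumrB !delta.
Qed.

Lemma prodr_setD1_const (R : comPzSemiRingType) (T : finType) (S : {set T})
    r (F : T -> R) c :
  r \in S -> {in S :\ r, forall k, F k = c} -> \prod_(k in S) F k = F r * c ^+ #|S|.-1.
Proof.
move=> rS Fc; rewrite (big_setD1 r) //= (eq_bigr (fun=> c)) // prodr_const.
by rewrite (cardsD1 r S) rS.
Qed.

Lemma quadratic_eq0 (F : fieldType) (a b m1 m2 : F) :
  m1 != 0 -> m2 != 0 -> m1 != m2 ->
  a * m1 ^+ 2 + b * m1 = 0 -> a * m2 ^+ 2 + b * m2 = 0 -> a = 0 /\ b = 0.
Proof.
have linear m : m != 0 -> a * m ^+ 2 + b * m = 0 -> a * m + b = 0.
  move=> m_neq0 /eqP; rewrite expr2 mulrA -mulrDl mulf_eq0 (negbTE m_neq0) orbF.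
  by move/eqP.
move=> m1_neq0 m2_neq0 m12 /(linear _ m1_neq0) r1 /(linear _ m2_neq0) r2.
have /eqP : a * (m1 - m2) = 0.
  by rewrite mulrBr -[a * m1](addrK b) r1 -[a * m2](addrK b) r2 subrr.
rewrite mulf_eq0 subr_eq0 (negbTE m12) orbF => /eqP a0.
by split=> //; move: r1; rewrite a0 mul0r add0r.
Qed.

Lemma sorted_nseq_cat (R : realDomainType) (x : R) a t :
  sorted <=%R t -> all (>= x) t -> sorted <=%R (nseq a x ++ t).
Proof.
move=> t_sorted t_ge; elim: a => [//|a IH] /=.
rewrite (path_sortedE le_trans) IH andbT all_cat t_ge andbT.
by apply/allP => y; rewrite mem_nseq => /andP[_ /eqP ->].
Qed.

Lemma card_ltn_ord N l : (l <= N)%N -> #|[set i : 'I_N | (i < l)%N]| = l.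
Proof.
move=> lN; have -> : [set i : 'I_N | (i < l)%N] = [set widen_ord lN j | j : 'I_l].
  apply/setP => i; rewrite !inE; apply/idP/imsetP => [il|[j _ ->]] /=; last exact: ltn_ord.
  by exists (Ordinal il) => //; apply: val_inj.
by rewrite card_imset ?card_ord // => j k /(congr1 val) /= /val_inj.
Qed.

Lemma card_sep_imset (aT rT : finType) (f : aT -> rT) (A : {set aT}) (P : pred rT) :
  {in A &, injective f} -> #|[set y in f @: A | P y]| = #|[set x in A | P (f x)]|.
Proof.
move=> f_inj; have -> : [set y in f @: A | P y] = f @: [set x in A | P (f x)].
  apply/setP => y; rewrite inE; apply/andP/imsetP => [[/imsetP[x xA ->] Pfx]|[x]].
    by exists x; rewrite // inE xA.
  by rewrite inE => /andP[xA Pfx] ->; rewrite imset_f.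
by rewrite card_in_imset //; apply: sub_in2 f_inj => x; rewrite inE => /andP[].
Qed.

Definition hcodeg (N : nat) (H : {set {set 'I_N}}) (i j : 'I_N) : nat :=
  #|[set h in H | (i \in h) && (j \in h)]|.

Lemma hdeg_codeg N (H : {set {set 'I_N}}) i : hdeg H i = hcodeg H i i.
Proof. by apply: eq_card => h; rewrite !inE andbb. Qed.

Lemma hLapE (R : realType) N (H : {set {set 'I_N}}) :
  (forall i, hdeg H i != 0%N) ->
  hLap R H = \matrix_(i, j) if i == j then 1 else (hcodeg H i j)%:R / (hdeg H i)%:R.
Proof.
move=> deg_neq0; rewrite /hLap.
have -> : hD R H = diag_mx (\row_i (hdeg H i)%:R).
  by apply/matrixP => i j; rewrite !mxE; case: eqP.
rewrite invmx_diag => [|i]; last by rewrite mxE pnatr_eq0.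
apply/matrixP => i j; rewrite mul_diag_mx !mxE.
by case: eqP => _; rewrite ?mulr0 ?subr0 // sub0r mulrN opprK mulrC.
Qed.

Definition flower_edges (T : finType) (U h1 h2 : {set T}) : {set {set T}} :=
  [set h1 :|: [set u] | u in U] :|: [set h2 :|: [set u] | u in U].

Lemma mem_flower_edges (T : finType) (U h1 h2 : {set T}) h :
  h \in flower_edges U h1 h2 ->
  exists2 u, u \in U & h = h1 :|: [set u] \/ h = h2 :|: [set u].
Proof.
by rewrite in_setU => /orP[] /imsetP[u uU ->]; exists u => //; [left | right].
Qed.

Lemma no_isolated_flower_cover N (U h1 h2 : {set 'I_N}) :
  no_isolated (flower_edges U h1 h2) -> forall i, [|| i \in U, i \in h1 | i \in h2].
Proof.
move=> no_iso i; have [h /mem_flower_edges[u uU [] ->]] := no_iso i;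
by rewrite !inE => /orP[->|/eqP ->]; rewrite ?uU ?orbT.
Qed.

Lemma card_petal_pairs (T : finType) (U hk : {set T}) (i j : T) :
  #|[set u in U | (i \in hk :|: [set u]) && (j \in hk :|: [set u])]| =
  if i \in hk then (if j \in hk then #|U| else j \in U)
  else if j \in hk then (i \in U : nat) else (i == j) && (i \in U).
Proof.
have card1 k : #|[set u in U | k == u]| = (k \in U : nat).
  case: (boolP (k \in U)) => kU /=.
    rewrite -(cards1 k); apply: eq_card => u; rewrite !inE eq_sym.
    by case: eqP => [->|]; rewrite ?kU ?andbF.
  by apply: eq_card0 => u; rewrite !inE; apply: contraNF kU => /andP[uU /eqP ->].
have -> : [set u in U | (i \in hk :|: [set u]) && (j \in hk :|: [set u])] =
          [set u in U | ((i \in hk) || (i == u)) && ((j \in hk) || (j == u))].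
  by apply/setP => u; rewrite !inE.
case: (i \in hk); case: (j \in hk) => /=; last first.
  case: (eqVneq i j) => [<-|ij] /=.
    by rewrite -card1; apply: eq_card => u; rewrite !inE andbb.
  apply: eq_card0 => u; rewrite !inE; apply/negP => /andP[_ /andP[/eqP iu /eqP ju]].
  by move: ij; rewrite iu ju eqxx.
all: by rewrite -?card1; apply: eq_card => u; rewrite !inE ?andbT.
Qed.

Lemma petal_edge_inj (T : finType) (U hk : {set T}) :
  [disjoint hk & U] -> {in U &, injective (fun u => hk :|: [set u])}.
Proof.
move=> hkU u v uU vU e; have : u \in hk :|: [set v] by rewrite -e !inE eqxx orbT.
by rewrite !inE (disjointFl hkU uU) => /eqP.
Qed.

Section Hyperflower2.
Variables (N : nat) (U h1 h2 : {set 'I_N}).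
Hypothesis flower_cover : forall i, [|| i \in U, i \in h1 | i \in h2].
Hypotheses (h1h2 : [disjoint h1 & h2]) (h12U : [disjoint h1 :|: h2 & U]).
Variables (u0 w1 w2 : 'I_N).
Hypotheses (u0U : u0 \in U) (w1h1 : w1 \in h1) (w2h2 : w2 \in h2).

Let l := #|U|.
Let n1 := #|h1|.
Let n2 := #|h2|.

Variant flower_part_spec (i : 'I_N) : bool -> bool -> bool -> Prop :=
| InCenter of i \in U : flower_part_spec i true false false
| InPetal1 of i \in h1 : flower_part_spec i false true false
| InPetal2 of i \in h2 : flower_part_spec i false false true.

Lemma flower_partP i : flower_part_spec i (i \in U) (i \in h1) (i \in h2).
Proof.
case/or3P: (flower_cover i) => [iU|i1|i2].
- have := disjointFl h12U iU; rewrite in_setU => /norP[/negbTE-> /negbTE->].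
  by rewrite iU; constructor.
- have iU : i \in U = false by apply: (disjointFr h12U); rewrite in_setU i1.
  by rewrite iU i1 (disjointFr h1h2 i1); constructor.
- have iU : i \in U = false by apply: (disjointFr h12U); rewrite in_setU i2 orbT.
  by rewrite iU i2 (disjointFl h1h2 i2); constructor.
Qed.

Lemma big_flower_part (T : Type) (idx : T) (op : Monoid.com_law idx) (F : 'I_N -> T) :
  \big[op/idx]_i F i =
  op (op (\big[op/idx]_(i in U) F i) (\big[op/idx]_(i in h1) F i))
     (\big[op/idx]_(i in h2) F i).
Proof.
rewrite [LHS](bigID (mem U)) /= -[RHS]Monoid.mulmA; congr (op _ _).
rewrite [LHS](bigID (mem h1)) /=.
by congr (op _ _); apply: eq_bigl => i /=; case: flower_partP.
Qed.

Lemma flower_card : N = (l + n1 + n2)%N.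
Proof.
by have := @big_flower_part nat 0 addn (fun=> 1%N); rewrite /= !sum1_card card_ord.
Qed.

Let l_gt0 : (0 < l)%N. Proof. by apply/card_gt0P; exists u0. Qed.
Let n1_gt0 : (0 < n1)%N. Proof. by apply/card_gt0P; exists w1. Qed.
Let n2_gt0 : (0 < n2)%N. Proof. by apply/card_gt0P; exists w2. Qed.

Lemma hcodeg_flower i j : hcodeg (flower_edges U h1 h2) i j =
  if i \in U then (if j \in U then (i == j) * 2 else 1)%N
  else if j \in U then 1%N
  else if i \in h1 then ((j \in h1) * l)%N else ((j \in h2) * l)%N.
Proof.
have petals_disjoint :
    [disjoint [set h1 :|: [set u] | u in U] & [set h2 :|: [set u] | u in U]].
  apply/pred0P => h /=; apply/negP => /andP[/imsetP[u uU ->] /imsetP[v vU e]].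
  have : w1 \in h2 :|: [set v] by rewrite -e in_setU w1h1.
  rewrite in_setU (disjointFr h1h2 w1h1) in_set1 => /eqP wv.
  by move: vU; rewrite -wv (disjointFr h12U) // in_setU w1h1.
have h1U : [disjoint h1 & U] by apply: disjointWl h12U; apply: subsetUl.
have h2U : [disjoint h2 & U] by apply: disjointWl h12U; apply: subsetUr.
rewrite /hcodeg /flower_edges setIdE setIUl.
set S := [set h : {set 'I_N} | (i \in h) && (j \in h)].
rewrite cardsU (disjoint_setI0 (disjointW (subsetIl _ S) (subsetIl _ S) petals_disjoint)).
rewrite cards0 subn0 -!setIdE.
rewrite (card_sep_imset _ (petal_edge_inj h1U)) (card_sep_imset _ (petal_edge_inj h2U)).
rewrite /= !card_petal_pairs.
case: (eqVneq i j) => [<-|_].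
  by case: (flower_partP i); rewrite /= ?mul1n ?addn0.
by case: (flower_partP i); case: (flower_partP j); rewrite /= ?mul1n ?mul0n ?addn0.
Qed.

Lemma hdeg_flower i : hdeg (flower_edges U h1 h2) i = if i \in U then 2%N else l.
Proof.
by rewrite hdeg_codeg hcodeg_flower eqxx; case: (flower_partP i); rewrite /= ?mul1n.
Qed.

Definition flower_case (T : Type) (a b c : T) (i : 'I_N) : T :=
  if i \in U then a else if i \in h1 then b else c.

Lemma flower_case_center T (a b c : T) i : i \in U -> flower_case a b c i = a.
Proof. by rewrite /flower_case => ->. Qed.

Lemma flower_case_petal1 T (a b c : T) i : i \in h1 -> flower_case a b c i = b.
Proof. by rewrite /flower_case; case: (flower_partP i). Qed.

Lemma flower_case_petal2 T (a b c : T) i : i \in h2 -> flower_case a b c i = c.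
Proof. by rewrite /flower_case; case: (flower_partP i). Qed.

Definition flower_rep : 'I_N -> 'I_N := flower_case u0 w1 w2.

Lemma flower_rep_part k :
  [/\ (flower_rep k \in U) = (k \in U), (flower_rep k \in h1) = (k \in h1)
    & (flower_rep k \in h2) = (k \in h2)].
Proof.
rewrite /flower_rep /flower_case; case: (flower_partP k) => _.
- by case: (flower_partP u0) u0U.
- by case: (flower_partP w1) w1h1.
- by case: (flower_partP w2) w2h2.
Qed.

Section Spectrum.
Variable R : rcfType.

Definition flower_lap : 'M[R]_N := \matrix_(i, j)
  if i \in U then (if j \in U then (i == j)%:R else 2^-1)
  else if j \in U then (l%:R)^-1
  else if i \in h1 then (j \in h1)%:R else (j \in h2)%:R.

Lemma flower_lap_center i j : j \in U ->
  flower_lap i j = if i \in U then (i == j)%:R else (l%:R)^-1.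
Proof. by move=> jU; rewrite mxE jU; case: ifP. Qed.

Lemma flower_lap_petal i j : j \notin U ->
  flower_lap i j = flower_case 2^-1 (j \in h1)%:R (j \in h2)%:R i.
Proof. by move=> /negbTE jU; rewrite mxE jU. Qed.

Lemma flower_lap_centerB i k r : k \in U -> r \in U ->
  flower_lap i k - flower_lap i r = (i == k)%:R - (i == r)%:R.
Proof.
move=> kU rU; rewrite !flower_lap_center //; case: ifP => // iU.
have neq j : j \in U -> (i == j) = false by move=> jU; apply: contraFF iU => /eqP ->.
by rewrite !neq ?subrr.
Qed.

Lemma flower_lap_repB i k :
  flower_lap i k - flower_lap i (flower_rep k) =
  ((i == k)%:R - (i == flower_rep k)%:R) * (k \in U)%:R.
Proof.
have [repU rep1 rep2] := flower_rep_part k.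
case: (boolP (k \in U)) => kU; first by rewrite mulr1 flower_lap_centerB ?repU.
by rewrite mulr0 !flower_lap_petal ?repU // rep1 rep2 subrr.
Qed.

Lemma sum_flower_part (F : 'I_N -> R) :
  \sum_i F i = \sum_(i in U) F i + \sum_(i in h1) F i + \sum_(i in h2) F i.
Proof. exact: big_flower_part. Qed.

Lemma prod_flower_part (F : 'I_N -> {poly R}) :
  \prod_i F i = \prod_(i in U) F i * \prod_(i in h1) F i * \prod_(i in h2) F i.
Proof. exact: big_flower_part. Qed.

Lemma sum_flower_case (a b c : R) :
  \sum_i flower_case a b c i = l%:R * a + n1%:R * b + n2%:R * c.
Proof.
rewrite sum_flower_part (eq_bigr _ (fun i => @flower_case_center _ a b c i)).
rewrite (eq_bigr _ (fun i => @flower_case_petal1 _ a b c i)).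
by rewrite (eq_bigr _ (fun i => @flower_case_petal2 _ a b c i)) !sumr_const !mulr_natl.
Qed.

Lemma flower_caseM (a b c a' b' c' : R) i :
  flower_case a b c i * flower_case a' b' c' i = flower_case (a * a') (b * b') (c * c') i.
Proof. by rewrite /flower_case; case: ifP => // _; case: ifP. Qed.

Lemma sum_flower_lap_center i : \sum_(j in U) flower_lap i j = 1.
Proof.
rewrite (eq_bigr _ (fun j => @flower_lap_center i j)); case: (boolP (i \in U)) => iU /=.
  rewrite (bigD1 i) //= eqxx big1 ?addr0 // => j /andP[_ /negbTE].
  by rewrite eq_sym => ->.
by rewrite sumr_const -[_ *+ _]mulr_natl mulfV // pnatr_eq0 -lt0n.
Qed.

Lemma flower_lap_case a b c i :
  \sum_j flower_lap i j * flower_case a b c j =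
  flower_case (a + (n1%:R * b + n2%:R * c) / 2) (a + n1%:R * b) (a + n2%:R * c) i.
Proof.
have sumU : \sum_(j in U) flower_lap i j * flower_case a b c j = a.
  rewrite -[RHS]mul1r -(sum_flower_lap_center i) mulr_suml.
  by apply: eq_bigr => j jU; rewrite flower_case_center.
have sum_petal (hk : {set 'I_N}) (x y : R) :
    {in hk, forall j, flower_lap i j * flower_case a b c j = x * y} ->
    \sum_(j in hk) flower_lap i j * flower_case a b c j = #|hk|%:R * (x * y).
  by move=> petal; rewrite (eq_bigr _ petal) sumr_const mulr_natl.
rewrite sum_flower_part sumU.
rewrite (@sum_petal h1 (flower_case 2^-1 1 0 i) b) => [|j j1]; last first.
  rewrite (flower_case_petal1 a b c j1) flower_lap_petal; last by case: (flower_partP j) j1.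
  by rewrite j1 (disjointFr h1h2 j1).
rewrite (@sum_petal h2 (flower_case 2^-1 0 1 i) c) => [|j j2]; last first.
  rewrite (flower_case_petal2 a b c j2) flower_lap_petal; last by case: (flower_partP j) j2.
  by rewrite j2 (disjointFl h1h2 j2).
rewrite /flower_case -/n1 -/n2; case: ifP => _; last case: ifP => _.
all: by field.
Qed.

Definition flower_disc : R := Num.sqrt (1 + (n1%:R - n2%:R) ^+ 2).
Definition mu_minus : R := (n1%:R + n2%:R + 1 - flower_disc) / 2.
Definition mu_plus : R := (n1%:R + n2%:R + 1 + flower_disc) / 2.

Definition flower_quad (m : R) : R :=
  m ^+ 2 - (n1%:R + n2%:R + 1) * m + (n1%:R + n2%:R) / 2 + n1%:R * n2%:R.

Lemma flower_disc_gt0 : 0 < flower_disc.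
Proof. by rewrite sqrtr_gt0 ltr_wpDr ?sqr_ge0. Qed.

Lemma flower_quadE m : flower_quad m = (m - mu_minus) * (m - mu_plus).
Proof.
have disc2 : flower_disc ^+ 2 = 1 + (n1%:R - n2%:R) ^+ 2.
  by rewrite sqr_sqrtr // addr_ge0 ?sqr_ge0.
apply/eqP; rewrite -subr_eq0; apply/eqP.
transitivity ((flower_disc ^+ 2 - (1 + (n1%:R - n2%:R) ^+ 2)) / 4).
  by rewrite /flower_quad /mu_minus /mu_plus; field.
by rewrite disc2 subrr mul0r.
Qed.

Lemma mu_minus_lt_plus : mu_minus < mu_plus.
Proof. by have := flower_disc_gt0; rewrite /mu_minus /mu_plus; lra. Qed.

Lemma mu_minus_ge1 : 1 <= mu_minus.
Proof.
have n1_ge1 : 1 <= n1%:R :> R by rewrite ler1n.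
have n2_ge1 : 1 <= n2%:R :> R by rewrite ler1n.
suff : flower_disc <= n1%:R + n2%:R - 1 by rewrite /mu_minus; lra.
rewrite -(ger0_norm (_ : 0 <= n1%:R + n2%:R - 1)) -?sqrtr_sqr; last lra.
rewrite ler_sqrt ?sqr_ge0 //.
have := mulr_ge0 (_ : 0 <= n1%:R - 1 :> R) (_ : 0 <= n2%:R - 1 :> R); nra.
Qed.

(* Solves the U- and h2-rows of the quotient eigenvalue equation for every m;
   the h1-row is equivalent to m * flower_quad m = 0. *)
Definition quot_eigvec (m : R) : 'I_N -> R :=
  flower_case (n1%:R * (m - n2%:R)) (2 * (m - 1) * (m - n2%:R) - n2%:R) n1%:R.

Lemma flower_lap_quot_eigvec m : m * flower_quad m = 0 ->
  forall i, \sum_j flower_lap i j * quot_eigvec m j = quot_eigvec m i * m.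
Proof.
move=> root i; rewrite flower_lap_case /quot_eigvec /flower_case.
case: ifP => _; last case: ifP => _.
- by field.
- apply/eqP; rewrite -subr_eq0; apply/eqP.
  transitivity (-2 * (m * flower_quad m)); last by rewrite root mulr0.
  by rewrite /flower_quad; field.
- by ring.
Qed.

Definition quot_val : 'I_N -> R := flower_case 0 mu_minus mu_plus.

Lemma quot_val_root k : quot_val k * flower_quad (quot_val k) = 0.
Proof.
rewrite flower_quadE /quot_val /flower_case.
by case: ifP => _; [|case: ifP => _]; rewrite ?subrr ?mul0r ?mulr0.
Qed.

Definition flower_eigvec (k i : 'I_N) : R :=
  if k == flower_rep k then quot_eigvec (quot_val k) i
  else (i == k)%:R - (i == flower_rep k)%:R.

Definition flower_eigval (k : 'I_N) : R :=
  if k == flower_rep k then quot_val k else (k \in U)%:R.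

Definition flower_eigmx : 'M[R]_N := \matrix_(i, k) flower_eigvec k i.

Lemma flower_lap_eigen :
  flower_lap *m flower_eigmx = flower_eigmx *m diag_mx (\row_k flower_eigval k).
Proof.
apply/matrixP => i k; rewrite mul_mx_diag !mxE.
under eq_bigr do rewrite [flower_eigmx _ _]mxE.
rewrite /flower_eigvec /flower_eigval; case: eqP => _.
  exact: flower_lap_quot_eigvec (quot_val_root k) i.
by rewrite sum_mul_deltaB flower_lap_repB.
Qed.

Lemma flower_eigmx_inj (v : 'rV[R]_N) : v *m flower_eigmx = 0 -> v = 0.
Proof.
(* v is constant on the parts, and then p is a quadratic vanishing at the
   three distinct points 0, mu_minus and mu_plus. *)
move=> /rowP vE0; have vE k : \sum_i v 0 i * flower_eigvec k i = 0.
  by have := vE0 k; rewrite !mxE; under eq_bigr do rewrite mxE.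
have v_rep i : v 0 i = v 0 (flower_rep i).
  have := vE i; rewrite /flower_eigvec; case: eqP => [<- //|_].
  by rewrite sum_mul_deltaB => /subr0_eq.
set x := v 0 u0; set y := v 0 w1; set z := v 0 w2.
have v_case i : v 0 i = flower_case x y z i.
  by rewrite v_rep /flower_rep /flower_case; case: ifP => // _; case: ifP.
pose p m := \sum_i v 0 i * quot_eigvec m i.
have pE m : p m = 2 * n1%:R * y * m ^+ 2 + n1%:R * (l%:R * x - 2 * (1 + n2%:R) * y) * m
                  + n1%:R * n2%:R * (y + z - l%:R * x).
  rewrite /p; under eq_bigr do rewrite v_case flower_caseM.
  by rewrite sum_flower_case; ring.
have p_root k : k = flower_rep k -> p (quot_val k) = 0.
  by move=> kk; have := vE k; rewrite /flower_eigvec -kk eqxx.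
have := p_root u0; rewrite /flower_rep /quot_val !flower_case_center // pE => /(_ erefl) p0.
have := p_root w1; rewrite /flower_rep /quot_val !flower_case_petal1 // pE => /(_ erefl) p1.
have := p_root w2; rewrite /flower_rep /quot_val !flower_case_petal2 // pE => /(_ erefl) p2.
rewrite expr0n !mulr0 !add0r in p0; rewrite p0 !addr0 in p1 p2.
have mu_minus_gt0 : 0 < mu_minus by apply: lt_le_trans mu_minus_ge1.
have [A0 B0] := quadratic_eq0 (lt0r_neq0 mu_minus_gt0)
  (lt0r_neq0 (lt_trans mu_minus_gt0 mu_minus_lt_plus))
  (negbT (lt_eqF mu_minus_lt_plus)) p1 p2.
have nat_neq0 k : (0 < k)%N -> k%:R != 0 :> R by rewrite pnatr_eq0 -lt0n.
have y0 : y = 0.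
  by apply: (mulfI (_ : 2 * n1%:R != 0)); rewrite ?mulf_neq0 ?nat_neq0 ?mulr0.
have x0 : x = 0.
  apply: (mulfI (_ : n1%:R * l%:R != 0)); rewrite ?mulf_neq0 ?nat_neq0 //.
  by rewrite mulr0 -B0 y0; ring.
have z0 : z = 0.
  apply: (mulfI (_ : n1%:R * n2%:R != 0)); rewrite ?mulf_neq0 ?nat_neq0 //.
  by rewrite mulr0 -p0 x0 y0; ring.
apply/rowP => i; rewrite v_case x0 y0 z0 mxE /flower_case.
by case: ifP => // _; case: ifP.
Qed.

Lemma flower_eigmx_unit : flower_eigmx \in unitmx.
Proof.
rewrite -row_free_unit -kermx_eq0; apply/eqP/row_matrixP => i.
by rewrite row0; apply: flower_eigmx_inj; rewrite -row_mul mulmx_ker row0.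
Qed.

Lemma prod_flower_class (S : {set 'I_N}) r c :
  r \in S -> {in S, forall k, flower_rep k = r} -> {in S, forall k, (k \in U)%:R = c} ->
  \prod_(k in S) ('X - (flower_eigval k)%:P) =
  ('X - (quot_val r)%:P) * ('X - c%:P) ^+ #|S|.-1.
Proof.
move=> rS rep_r U_c; have eigval_r : flower_eigval r = quot_val r.
  by rewrite /flower_eigval rep_r ?eqxx.
rewrite -eigval_r; apply: prodr_setD1_const => // k; rewrite !inE => /andP[kr kS].
by rewrite /flower_eigval rep_r // (negbTE kr) U_c.
Qed.

Definition flower_spectrum : seq R :=
  nseq (n1 + n2 - 1) 0 ++ nseq (l - 1) 1 ++ [:: mu_minus; mu_plus].

Lemma char_poly_flower_lap :
  char_poly flower_lap = \prod_(x <- flower_spectrum) ('X - x%:P).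
Proof.
rewrite (char_poly_similar flower_eigmx_unit flower_lap_eigen).
rewrite char_poly_trig ?diag_mx_is_trig //.
rewrite (eq_bigr (fun k => 'X - (flower_eigval k)%:P)) => [|k _]; last first.
  by rewrite /diag_mx !mxE eqxx mulr1n.
have rep_u0 : {in U, forall k, flower_rep k = u0} by move=> k; apply: flower_case_center.
have rep_w1 : {in h1, forall k, flower_rep k = w1} by move=> k; apply: flower_case_petal1.
have rep_w2 : {in h2, forall k, flower_rep k = w2} by move=> k; apply: flower_case_petal2.
have center_1 : {in U, forall k, (k \in U)%:R = 1 :> R} by move=> k ->.
have petal1_0 : {in h1, forall k, (k \in U)%:R = 0 :> R} by move=> k; case: flower_partP.
have petal2_0 : {in h2, forall k, (k \in U)%:R = 0 :> R} by move=> k; case: flower_partP.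
rewrite prod_flower_part (prod_flower_class u0U rep_u0 center_1).
rewrite (prod_flower_class w1h1 rep_w1 petal1_0) (prod_flower_class w2h2 rep_w2 petal2_0).
rewrite /quot_val flower_case_center // flower_case_petal1 // flower_case_petal2 //.
rewrite /flower_spectrum !big_cat !big_nseq !iter_mulr_1 !big_cons big_nil -/l -/n1 -/n2.
have -> : (n1 + n2 - 1 = n1.-1 + n2.-1 + 1)%N by lia.
by rewrite /= !subn1 !exprD expr1; ring.
Qed.

Lemma flower_spectrum_sorted : sorted <=%R flower_spectrum.
Proof.
have mu_minus_le_plus := ltW mu_minus_lt_plus.
have one_le_plus := le_trans mu_minus_ge1 mu_minus_le_plus.
rewrite /flower_spectrum; apply: sorted_nseq_cat.
  by apply: sorted_nseq_cat; rewrite /= ?mu_minus_le_plus ?mu_minus_ge1 ?one_le_plus.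
rewrite all_cat /= (le_trans ler01 mu_minus_ge1) (le_trans ler01 one_le_plus) !andbT.
by apply/allP => x; rewrite mem_nseq => /andP[_ /eqP ->].
Qed.

Lemma nth_flower_spectrum :
  flower_spectrum`_N.-1 = mu_plus /\ flower_spectrum`_N.-2 = mu_minus.
Proof.
rewrite /flower_spectrum catA flower_card.
set s := nseq _ _ ++ nseq _ _; have size_s : size s = (l + n1 + n2).-2.
  by rewrite /s size_cat !size_nseq; lia.
have -> : (l + n1 + n2).-1 = (size s).+1 by rewrite size_s; lia.
by rewrite size_s -size_s !nth_cat ltnn subnn ltnNge leqnSn subSnn.
Qed.

Lemma flower_spectrum_props :
  [/\ count_mem (0 : R) flower_spectrum = (N - l - 1)%N,
      (l - 1 <= count_mem (1%R : R) flower_spectrum)%N,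
      1 < flower_spectrum`_N.-1 &
      flower_spectrum`_N.-2 = N%:R - flower_spectrum`_N.-1 - l%:R + 1 /\
      1 <= flower_spectrum`_N.-2].
Proof.
have mu_minus_gt0 : 0 < mu_minus by apply: lt_le_trans mu_minus_ge1.
have [-> ->] := nth_flower_spectrum.
split; last split.
- rewrite /flower_spectrum !count_cat !count_nseq /= eqxx oner_eq0 flower_card.
  by rewrite (gt_eqF mu_minus_gt0) (gt_eqF (lt_trans mu_minus_gt0 mu_minus_lt_plus)); lia.
- by rewrite /flower_spectrum !count_cat !count_nseq /= eqxx mul1n; lia.
- exact: le_lt_trans mu_minus_ge1 mu_minus_lt_plus.
- by rewrite flower_card !natrD /mu_minus /mu_plus; field.
- exact: mu_minus_ge1.
Qed.

Lemma flower_spectrum_balanced : n1 = n2 ->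
  flower_spectrum`_N.-1 = (N%:R - l%:R) / 2 + 1 /\
  flower_spectrum`_N.-2 = (N%:R - l%:R) / 2.
Proof.
move=> n12; have [-> ->] := nth_flower_spectrum.
have disc1 : flower_disc = 1 by rewrite /flower_disc n12 subrr expr0n addr0 sqrtr1.
by rewrite /mu_minus /mu_plus disc1 flower_card !natrD n12; split; field.
Qed.

End Spectrum.

Lemma hLap_flower (R : realType) : hLap R (flower_edges U h1 h2) = flower_lap R.
Proof.
rewrite hLapE => [|i]; last by rewrite hdeg_flower; case: ifP => // _; rewrite -lt0n.
apply/matrixP => i j; rewrite !mxE hcodeg_flower hdeg_flower.
case: (eqVneq i j) => [<-|_]; first by case: (flower_partP i); rewrite ?eqxx.
case: (flower_partP i); case: (flower_partP j) => //= _ _;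
  by rewrite ?mul0n ?mul1n ?mulr0n ?mulr1n ?mul0r ?div1r // divff // pnatr_eq0 -lt0n.
Qed.

Lemma flower_edges_uniform :
  {in flower_edges U h1 h2 &, forall h h' : {set 'I_N}, #|h| = #|h'|} -> n1 = n2.
Proof.
move=> uniform.
have edge (hk : {set 'I_N}) : hk :|: [set u0] \in [set hk :|: [set u] | u in U].
  by apply/imsetP; exists u0.
have := uniform (h1 :|: [set u0]) (h2 :|: [set u0]); rewrite !in_setU !edge orbT.
have [u0h1 u0h2] : u0 \notin h1 /\ u0 \notin h2 by case: (flower_partP u0) u0U.
rewrite ![_ :|: [set u0]]setUC !cardsU1 u0h1 u0h2 => /(_ isT isT) /eqP.
by rewrite eqn_add2l => /eqP.
Qed.

Lemma flower_eigenvalues (R : realType) (lam : seq R) : sorted <=%R lam ->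
  char_poly (hLap R (flower_edges U h1 h2)) = \prod_(x <- lam) ('X - x%:P) ->
  lam = flower_spectrum R.
Proof.
rewrite hLap_flower char_poly_flower_lap => lam_sorted lam_char.
apply: (sorted_eq le_trans le_anti) => //; first exact: flower_spectrum_sorted.
by apply: prod_XsubC_eq; rewrite -lam_char.
Qed.

End Hyperflower2.

Theorem mainTheorem5 (R : realType) (N l : nat) (H : {set {set 'I_N}})
  (lam : seq R) :
  is_hyperflower2 l H ->
  no_isolated H ->
  size lam = N ->
  sorted <=%R lam ->
  char_poly (hLap R H) = \prod_(x <- lam) ('X - x%:P) ->
  [/\ count_mem (0 : R) lam = (N - l - 1)%N,
      (l - 1 <= count_mem (1%R : R) lam)%N,
      1 < lam`_(N.-1) &
      lam`_(N.-2) = N%:R - lam`_(N.-1) - l%:R + 1 /\ 1 <= lam`_(N.-2)] /\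
  (
      ((forall h h', h \in H -> h' \in H -> #|h| = #|h'|) ->
         lam`_(N.-1) = (N%:R - l%:R) / 2 + 1 /\
         lam`_(N.-2) = (N%:R - l%:R) / 2)).
Proof.
move=> [lN [h1 [h2 [-> h1_n0 h2_n0 h1h2 h12U]]]] no_iso _ lam_sorted lam_char.
set U := [set i : 'I_N | (i < l)%N] in h12U no_iso lam_char *.
have [w1 w1h1] := set0Pn _ h1_n0; have [w2 w2h2] := set0Pn _ h2_n0.
have [_ /mem_flower_edges[u0 u0U _] _] := no_iso w1.
have cover := no_isolated_flower_cover no_iso.
rewrite -(card_ltn_ord lN) -/U.
rewrite (flower_eigenvalues cover h1h2 h12U u0U w1h1 w2h2 lam_sorted lam_char).
split; first exact: (flower_spectrum_props cover h1h2 h12U u0U w1h1 w2h2).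
move=> /(flower_edges_uniform cover h1h2 h12U u0U).
exact: (flower_spectrum_balanced cover h1h2 h12U u0U w1h1 w2h2).
Qed.
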